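(* Let $R$ be a commutative ring with identity and let $\mathcal{N}(R)$ be the set of all nilpotent elements of $R$. Then $\mathcal{N}(R)=\bigcup_{a\in R} a\Gamma_a(R)=E_R(0)$.
   Context: For $a\in R$, $a\Gamma_{a}(R)=\{ar \mid r\in R,\ a^{k}r=0 \text{ for some } k\in\mathbb{Z}^{+}\}$. $E_R(0)=\{ar \mid a,r\in R,\ a^{k}r=0 \text{ for some } k\in\mathbb{Z}^{+}\}$ (the envelope of the zero ideal in the $R$-module $R$). *)

From mathcomp Require Import all_boot all_algebra.
From mathcomp Require Import classical_sets.
Set Implicit Arguments. Unset Strict Implicit. Unset Printing Implicit Defensive.
Import GRing.Theory.
Local Open Scope ring_scope.
Local Open Scope classical_set_scope.

Definition nilradical (R : comPzRingType) : set R :=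
  [set x : R | exists n : nat, (0 < n)%N /\ x ^+ n = 0].

Definition aGamma (R : comPzRingType) (a : R) : set R :=
  [set x : R | exists r : R, exists k : nat, [/\ (0 < k)%N, a ^+ k * r = 0 & x = a * r]].

Definition envelope0 (R : comPzRingType) : set R :=
  [set x : R | exists a r : R, exists k : nat, [/\ (0 < k)%N, a ^+ k * r = 0 & x = a * r]].

From mathcomp Require Import all_boot all_algebra.
From mathcomp Require Import classical_sets.
Local Open Scope ring_scope.
Local Open Scope classical_set_scope.
Import GRing.Theory.

Lemma expr_mul_nilpotent (R : comPzRingType) (a r : R) (k : nat) :
  a ^+ k * r = 0 -> (a * r) ^+ k.+1 = 0.
Proof.
move=> akr0.
by rewrite exprMn exprS [r ^+ k.+1]exprS mulrA -(mulrA a) akr0 mulr0 mul0r.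
Qed.

Lemma envelope0_sub_nilradical (R : comPzRingType) :
  @envelope0 R `<=` @nilradical R.
Proof.
by move=> _ [a [r [k [_ akr0 ->]]]]; exists k.+1; rewrite expr_mul_nilpotent.
Qed.

Lemma nilradical_sub_aGamma_self (R : comPzRingType) (x : R) :
  nilradical x -> aGamma x x.
Proof. by move=> [n [n_gt0 xn0]]; exists 1, n; rewrite !mulr1. Qed.

Lemma bigcup_aGamma_sub_envelope0 (R : comPzRingType) :
  \bigcup_(a in [set: R]) aGamma a `<=` @envelope0 R.
Proof. by move=> x [a _ [r [k akr]]]; exists a, r, k. Qed.

Theorem mainTheorem10 (R : comPzRingType) :
  @nilradical R = \bigcup_(a in [set: R]) aGamma a /\
  \bigcup_(a in [set: R]) aGamma a = @envelope0 R.
Proof.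
have nil_sub_gamma : @nilradical R `<=` \bigcup_(a in [set: R]) aGamma a.
  by move=> x /nilradical_sub_aGamma_self; exists x.
have gamma_sub_env := @bigcup_aGamma_sub_envelope0 R.
have env_sub_nil := @envelope0_sub_nilradical R.
split; apply/seteqP; split => // x.
- by move/gamma_sub_env/env_sub_nil.
- by move/env_sub_nil/nil_sub_gamma.
Qed.
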